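(* Let $\Lambda$ be a tree with distinguished root vertex $\lambda$, and let $r\ge 3$ be an integer. If $2\le\deg(\lambda)\le r-1$ and all other vertices of $\Lambda$ have degree at least $3$, then there is a perimeter $P$ of radius at most $r$ and a function $d:P\to\mathbb{N}^+$ satisfying $d(p)\le\deg(p)-1$ for all $p\in P$ and $\sum_{p\in P}d(p)=r$.
   Context: On the vertex set of a rooted tree $(\Lambda,\lambda)$ define the partial order $u\prec v$ iff the unique shortest path from $\lambda$ to $v$ passes through $u$. A finite set $P\subseteq V(\Lambda)$ is a perimeter if $P\ne\{\lambda\}$ and: (i) there is a constant $R$ such that every vertex $u$ with $d(u,\lambda)\ge R$ has some $p\in P$ with $p\prec u$; (ii) if $p,p'\in P$ and $p\prec p'$ then $p=p'$. The radius of $P$ is the smallest $R$ satisfying (i). Here $d$ denotes the path-length metric and $\mathbb{N}^+$ the positive integers. *)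

From Stdlib Require Import List Arith Lia.
Import ListNotations.

Section Graphs.
Context {V : Type} (adj : V -> V -> Prop).

Fixpoint walk (x : V) (l : list V) (y : V) : Prop :=
  match l with
  | nil => x = y
  | z :: l' => adj x z /\ walk z l' y
  end.

Definition is_tree : Prop :=
  (forall x y, adj x y -> adj y x) /\
  (forall x, ~ adj x x) /\
  (forall x y, exists l, walk x l y) /\
  (* no cycle: no closed walk x -> ... -> x of length >= 3 whose vertices
     (other than the repeated endpoint) are pairwise distinct *)
  (forall x l, walk x l x -> 3 <= length l -> ~ NoDup l).

Definition dist (x y : V) (n : nat) : Prop :=
  (exists l, walk x l y /\ length l = n) /\
  (forall l, walk x l y -> n <= length l).

Definition dist_ge (x y : V) (R : nat) : Prop :=
  forall n, dist x y n -> R <= n.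

(* u ≺ v : the (unique) shortest path from the root lam to v passes through u *)
Definition prec (lam u v : V) : Prop :=
  exists l n, walk lam l v /\ dist lam v n /\ length l = n /\ In u (lam :: l).

Definition deg_ge (v : V) (k : nat) : Prop :=
  exists l, NoDup l /\ (forall x, In x l -> adj v x) /\ length l = k.

Definition deg_le (v : V) (k : nat) : Prop :=
  forall l, NoDup l -> (forall x, In x l -> adj v x) -> length l <= k.

Definition perimeter_cond_i (lam : V) (P : list V) (R : nat) : Prop :=
  forall u, dist_ge u lam R -> exists p, In p P /\ prec lam p u.

Definition is_perimeter (lam : V) (P : list V) : Prop :=
  NoDup P /\
  ~ (forall x, In x P <-> x = lam) /\
  (exists R, perimeter_cond_i lam P R) /\
  (forall p p', In p P -> In p' P -> prec lam p p' -> p = p').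

(* P is a perimeter whose radius (least R satisfying (i)) is at most r *)
Definition perimeter_radius_le (lam : V) (P : list V) (r : nat) : Prop :=
  is_perimeter lam P /\ exists R, R <= r /\ perimeter_cond_i lam P R.

End Graphs.

(* Grade the tree by the distance [lev] to the root.  A vertex of level [j+1] has a unique
   neighbour of level [j] (two of them would close a cycle), so if every vertex of level [j]
   has finite degree, level [j+1] has exactly the sum of [deg p - 1] over level [j], hence at
   least twice as many vertices.  Starting from level 1, which has fewer than [r] vertices,
   the levels therefore grow until, at some level [j] with fewer than [r] vertices, the sum
   of [min (deg p - 1) r] reaches [r].  That level is a perimeter of radius [j], and [r] can
   be split among its vertices as required. *)

From Stdlib Require Import List Arith Lia ListDec Classical ClassicalEpsilon.
Import ListNotations.

Section ListFacts.
Context {A : Type}.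

Lemma list_sum_map_ge (c : A -> nat) k L :
  (forall p, In p L -> k <= c p) -> k * length L <= list_sum (map c L).
Proof.
  induction L as [|a L IH]; simpl; intros H; [lia|].
  rewrite Nat.mul_succ_r.
  specialize (IH (fun p Hp => H p (or_intror Hp))); specialize (H a (or_introl eq_refl)).
  lia.
Qed.

Lemma list_sum_map_In (c : A -> nat) L p : In p L -> c p <= list_sum (map c L).
Proof.
  induction L as [|a L IH]; simpl; [easy|]. intros [->|Hp]; [lia|specialize (IH Hp); lia].
Qed.

Lemma list_sum_map_split (c : A -> nat) L n :
  NoDup L -> (forall p, In p L -> 1 <= c p) -> length L <= n <= list_sum (map c L) ->
  exists d : A -> nat, (forall p, In p L -> 1 <= d p <= c p) /\ list_sum (map d L) = n.
Proof.
  revert n; induction L as [|a L IH]; intros n Hnd Hc Hn; simpl in Hn.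
  - exists (fun _ => 0); simpl; split; [tauto|lia].
  - apply NoDup_cons_iff in Hnd as [Ha Hnd].
    pose proof (Hc a (or_introl eq_refl)) as Hca.
    pose proof (list_sum_map_ge c 1 L (fun p Hp => Hc p (or_intror Hp))) as HL.
    set (m := Nat.min (c a) (n - length L)).
    destruct (IH (n - m) Hnd) as [d [Hd Hsum]];
      [intros p Hp; apply Hc; now right | lia |].
    exists (fun y => if excluded_middle_informative (y = a) then m else d y).
    split.
    + intros p [<-|Hp].
      * destruct (excluded_middle_informative (a = a)); [lia|congruence].
      * destruct (excluded_middle_informative (p = a)) as [->|]; [contradiction|auto].
    + simpl; destruct (excluded_middle_informative (a = a)) as [_|]; [|congruence].
      rewrite (map_ext_in _ d L), Hsum; [lia|].
      intros y Hy; destruct (excluded_middle_informative (y = a)) as [->|]; easy.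
Qed.

Lemma nth_app_rev (p q : list A) d k : k < length p + length q ->
  nth k (p ++ rev q) d =
    if k <? length p then nth k p d else nth (length p + length q - S k) q d.
Proof.
  intros Hk; destruct (Nat.ltb_spec k (length p)).
  - now apply app_nth1.
  - rewrite app_nth2, rev_nth by lia; f_equal; lia.
Qed.

Lemma NoDup_length_one (l : list A) u :
  NoDup l -> In u l -> (forall y, In y l -> y = u) -> length l = 1.
Proof.
  intros Hnd Hu Hall.
  assert (Hle : length l <= length [u]).
  { apply NoDup_incl_length; auto. intros y Hy; rewrite (Hall y Hy); now left. }
  destruct l; simpl in *; [contradiction|lia].
Qed.

End ListFacts.

Section Graphs.
Context {V : Type} (adj : V -> V -> Prop).

Definition neighbors (v : V) (N : list V) : Prop :=
  NoDup N /\ forall x, In x N <-> adj v x.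

Lemma walk_app x l1 m l2 y :
  walk adj x l1 m -> walk adj m l2 y -> walk adj x (l1 ++ l2) y.
Proof.
  revert x; induction l1 as [|a l1 IH]; simpl; intros x H1 H2.
  - now subst.
  - destruct H1; split; eauto.
Qed.

Lemma walk_app_inv x l1 l2 y :
  walk adj x (l1 ++ l2) y -> exists m, walk adj x l1 m /\ walk adj m l2 y.
Proof.
  revert x; induction l1 as [|a l1 IH]; simpl; intros x H.
  - now exists x.
  - destruct H as [Ha H]; destruct (IH a H) as [m [H1 H2]]; now exists m.
Qed.

Lemma walk_nth d x l y i : walk adj x l y -> i <= length l ->
  walk adj x (firstn i l) (nth i (x :: l) d) /\ walk adj (nth i (x :: l) d) (skipn i l) y.
Proof.
  revert x i; induction l as [|a l IH]; intros x i H Hi; simpl in *.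
  - replace i with 0 by lia; simpl; auto.
  - destruct i as [|i]; simpl; [auto|].
    destruct H as [Ha H]; destruct (IH a i H ltac:(lia)); simpl; auto.
Qed.

Lemma walk_last d x l y : walk adj x l y -> nth (length l) (x :: l) d = y.
Proof.
  intros H; destruct (walk_nth d x l y (length l) H (le_n _)) as [_ Hy].
  now rewrite skipn_all in Hy.
Qed.

Lemma dist_unique x y n m : dist adj x y n -> dist adj x y m -> n = m.
Proof.
  intros [[l [Hl <-]] Hn] [[l' [Hl' <-]] Hm].
  specialize (Hn l' Hl'); specialize (Hm l Hl); lia.
Qed.

Lemma dist_exists x l y : walk adj x l y -> exists n, dist adj x y n.
Proof.
  remember (length l) as n eqn:En; revert l En.
  induction n as [n IH] using lt_wf_ind; intros l En Hl.
  destruct (classic (exists l', walk adj x l' y /\ length l' < n)) as [[l' [Hl' Hlt]]|Hmin].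
  - exact (IH _ Hlt l' eq_refl Hl').
  - exists n; split; [now exists l|].
    intros l' Hl'; apply Nat.nlt_ge; intros Hlt; eauto.
Qed.

Lemma deg_ge_le v k m : m <= k -> deg_ge adj v k -> deg_ge adj v m.
Proof.
  intros Hm [l [Hnd [Hl Hlen]]]; exists (firstn m l); repeat split.
  - rewrite <- (firstn_skipn m l) in Hnd; exact (NoDup_app_remove_r _ _ Hnd).
  - intros x Hx; apply Hl; rewrite <- (firstn_skipn m l); apply in_or_app; now left.
  - rewrite firstn_length_le; lia.
Qed.

Lemma deg_ge_or_neighbors v k :
  deg_ge adj v (S k) \/ exists N, neighbors v N /\ length N <= k.
Proof.
  induction k as [|k [[l [Hnd [Hl Hlen]]]|[N [HN Hlen]]]].
  - destruct (classic (exists x, adj v x)) as [[x Hx]|Hno].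
    + left; exists [x]; split; [repeat constructor; easy|].
      split; [now intros y [<-|[]]|reflexivity].
    + right; exists []; split; [split; [constructor|]|simpl; lia].
      intros x; split; [intros []|intros Hx; exfalso; eauto].
  - destruct (classic (exists x, adj v x /\ ~ In x l)) as [[x [Hx Hnx]]|Hno].
    + left; exists (x :: l); repeat split; [now constructor| |simpl; lia].
      intros y [<-|Hy]; auto.
    + right; exists l; repeat split; auto; [|lia].
      intros Hx; apply NNPP; intros Hnx; eauto.
  - right; exists N; split; [auto|lia].
Qed.

Lemma deg_ge_neighbors_length v k N : deg_ge adj v k -> neighbors v N -> k <= length N.
Proof.
  intros [l [Hl [Hladj <-]]] [HN HNadj].
  apply NoDup_incl_length; auto; intros x Hx; apply HNadj, Hladj, Hx.
Qed.

(* [capacity r v c] says [c = min (deg v - 1) r]. *)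
Definition capacity (r : nat) (v : V) (c : nat) : Prop :=
  c <= r /\ deg_ge adj v (S c) /\ (c < r -> exists N, neighbors v N /\ length N = S c).

Lemma capacity_exists r v k :
  k <= r -> deg_ge adj v (S k) -> exists c, k <= c /\ capacity r v c.
Proof.
  intros Hk Hdeg.
  destruct (deg_ge_or_neighbors v r) as [Hbig|[N [[Hnd HN] Hlen]]].
  - exists r; split; [lia|split; [lia|split; [auto|lia]]].
  - assert (HNnb : neighbors v N) by now split.
    pose proof (deg_ge_neighbors_length v (S k) N Hdeg HNnb).
    exists (length N - 1); split; [lia|split; [lia|split]].
    + exists N; split; [auto|split; [apply HN|lia]].
    + intros _; exists N; split; [auto|lia].
Qed.

Context (adj_sym : forall x y, adj x y -> adj y x).

Lemma walk_rev_cons x l y z : walk adj x l y -> adj z y -> walk adj z (rev (x :: l)) x.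
Proof.
  revert x; induction l as [|a l IH]; simpl; intros x H Hz.
  - subst; simpl; auto.
  - destruct H as [Hxa H]; apply walk_app with a; [exact (IH a H Hz)|simpl; auto].
Qed.

Lemma walk_rev x l y : walk adj x l y -> exists l', walk adj y l' x /\ length l' = length l.
Proof.
  revert x; induction l as [|a l IH]; simpl; intros x H.
  - exists []; simpl; auto.
  - destruct H as [Hxa H]; destruct (IH a H) as [l' [Hl' E]].
    exists (l' ++ [x]); split; [apply walk_app with a; simpl; auto|].
    rewrite length_app; simpl; lia.
Qed.

Context (adj_irrefl : forall x, ~ adj x x)
  (adj_acyclic : forall x l, walk adj x l x -> 3 <= length l -> ~ NoDup l).

(* Inner vertices pairwise distinct: a cycle (excluded) or [x y x]; otherwise cut out the
   closed subwalk between two occurrences of a repeated vertex and recurse on it. *)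
Lemma closed_walk_backtracks x l : walk adj x l x -> 1 <= length l ->
  exists pre y z post, x :: l = pre ++ y :: z :: y :: post.
Proof.
  remember (length l) as n eqn:En; revert x l En.
  induction n as [n IH] using lt_wf_ind; intros x l En Hw Hn.
  destruct (classic (NoDup l)) as [Hnd|Hdup].
  - destruct l as [|a [|b [|c t]]]; simpl in *; try lia.
    + destruct Hw as [Ha <-]; destruct (adj_irrefl _ Ha).
    + destruct Hw as [_ [_ ->]]; now exists [], x, a, [].
    + destruct (adj_acyclic x (a :: b :: c :: t) Hw ltac:(simpl; lia) Hnd).
  - destruct (not_NoDup (fun u v : V => classic (u = v)) Hdup)
      as [a [l1 [l2 [l3 ->]]]].
    destruct (walk_app_inv _ _ _ _ Hw) as [m [_ [_ Hw2]]].
    destruct (walk_app_inv _ _ _ _ Hw2) as [m' [Hl2 [Hm'a _]]].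
    assert (Hloop : walk adj a (l2 ++ [a]) a) by (apply walk_app with m'; simpl; auto).
    assert (Hshorter : length (l2 ++ [a]) < n)
      by (subst n; rewrite !length_app; simpl; rewrite length_app; simpl; lia).
    destruct (IH _ Hshorter a (l2 ++ [a]) eq_refl Hloop) as [pre [y [z [post E]]]];
      [rewrite length_app; simpl; lia|].
    exists (x :: l1 ++ pre), y, z, (post ++ l3).
    replace (x :: l1 ++ a :: l2 ++ a :: l3) with ((x :: l1) ++ (a :: l2 ++ [a]) ++ l3)
      by (simpl; now rewrite <- !app_assoc).
    rewrite E; simpl; now rewrite <- !app_assoc.
Qed.

Lemma closed_walk_backtrack_nth d x l : walk adj x l x -> 1 <= length l ->
  exists i, i + 2 <= length l /\ nth i (x :: l) d = nth (i + 2) (x :: l) d.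
Proof.
  intros Hw Hl; destruct (closed_walk_backtracks x l Hw Hl) as [pre [y [z [post E]]]].
  exists (length pre); rewrite E.
  assert (Elen := f_equal (@length V) E); rewrite length_app in Elen; simpl in Elen.
  split; [lia|].
  rewrite !app_nth2 by lia.
  now replace (length pre + 2 - length pre) with 2 by lia; rewrite Nat.sub_diag.
Qed.

Context (lam : V) (lev : V -> nat) (lev_dist : forall v, dist adj lam v (lev v)).

Definition geodesic (g : list V) (v : V) : Prop := walk adj lam g v /\ length g = lev v.

Lemma geodesic_exists v : exists g, geodesic g v.
Proof. exact (proj1 (lev_dist v)). Qed.

Lemma lev_le_walk v l : walk adj lam l v -> lev v <= length l.
Proof. exact (proj2 (lev_dist v) l). Qed.

Lemma lev_root : lev lam = 0.
Proof. pose proof (lev_le_walk lam [] eq_refl); simpl in *; lia. Qed.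

Lemma lev_eq0 v : lev v = 0 -> v = lam.
Proof.
  intros H; destruct (geodesic_exists v) as [[|a g] [Hg E]]; [easy|simpl in E; lia].
Qed.

Lemma lev_adj a b : adj a b -> lev b <= S (lev a).
Proof.
  intros Hab; destruct (geodesic_exists a) as [g [Hg E]].
  assert (Hgb : walk adj lam (g ++ [b]) b) by (apply walk_app with a; simpl; auto).
  pose proof (lev_le_walk b _ Hgb); rewrite length_app in *; simpl in *; lia.
Qed.

Lemma lev_geodesic_nth g v i : geodesic g v -> i <= length g -> lev (nth i (lam :: g) lam) = i.
Proof.
  intros [Hg E] Hi; destruct (walk_nth lam lam g v i Hg Hi) as [Hpre Hpost].
  set (u := nth i (lam :: g) lam) in *.
  apply Nat.le_antisymm.
  - pose proof (lev_le_walk u _ Hpre); rewrite firstn_length_le in *; lia.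
  - destruct (geodesic_exists u) as [gu [Hgu Eu]].
    pose proof (lev_le_walk v _ (walk_app _ _ _ _ _ Hgu Hpost)).
    rewrite length_app, length_skipn in *; lia.
Qed.

Lemma parent_exists v : 1 <= lev v -> exists u, adj u v /\ S (lev u) = lev v.
Proof.
  intros Hv; destruct (geodesic_exists v) as [g [Hg E]].
  destruct (exists_last (l := g)) as [g' [a ->]]; [intros ->; simpl in E; lia|].
  destruct (walk_app_inv _ _ _ _ Hg) as [u [Hu [Huv Hav]]]; simpl in Hav; subst a.
  exists u; split; [exact Huv|].
  pose proof (lev_le_walk u g' Hu); pose proof (lev_adj u v Huv).
  rewrite length_app in E; simpl in E; lia.
Qed.

(* Closing the two geodesics through the edge [ab] gives a closed walk; the levels along it
   rise to [lev a], then fall from [lev b], so it can only backtrack at the edge [ab]. *)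
Lemma edge_levels a b ga gb : adj a b -> geodesic ga a -> geodesic gb b ->
  exists i, 2 * i + 1 = lev a + lev b /\ nth i (lam :: ga) lam = nth i (lam :: gb) lam.
Proof.
  intros Hab Hga Hgb; pose proof Hga as [Ha Ea]; pose proof Hgb as [Hb Eb].
  assert (Hloop : walk adj lam (ga ++ rev (lam :: gb)) lam)
    by exact (walk_app _ _ _ _ _ Ha (walk_rev_cons lam gb b a Hb Hab)).
  destruct (closed_walk_backtrack_nth lam lam _ Hloop) as [i [Hi Hback]];
    [rewrite length_app, length_rev; simpl; lia|].
  rewrite length_app, length_rev in Hi; simpl in Hi.
  change (lam :: ga ++ rev (lam :: gb)) with ((lam :: ga) ++ rev (lam :: gb)) in Hback.
  rewrite !nth_app_rev in Hback by (simpl; lia).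
  simpl length in Hback.
  pose proof (f_equal lev Hback) as Hlev.
  destruct (Nat.ltb_spec i (S (length ga))), (Nat.ltb_spec (i + 2) (S (length ga)));
    rewrite ?(lev_geodesic_nth ga a _ Hga), ?(lev_geodesic_nth gb b _ Hgb) in Hlev by lia;
    try lia.
  exists i; split; [lia|].
  rewrite Hback; f_equal; lia.
Qed.

Lemma adj_lev_succ a b : adj a b -> lev b = S (lev a) \/ lev a = S (lev b).
Proof.
  intros Hab.
  destruct (geodesic_exists a) as [ga Hga], (geodesic_exists b) as [gb Hgb].
  destruct (edge_levels a b ga gb Hab Hga Hgb) as [i [Ei _]].
  pose proof (lev_adj a b Hab); pose proof (lev_adj b a (adj_sym _ _ Hab)); lia.
Qed.

Lemma parent_unique a b q :
  adj a q -> adj b q -> S (lev a) = lev q -> S (lev b) = lev q -> a = b.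
Proof.
  intros Haq Hbq Ea Eb.
  destruct (geodesic_exists a) as [ga [Ha La]], (geodesic_exists b) as [gb [Hb Lb]].
  assert (Hgq : geodesic (ga ++ [q]) q).
  { split; [apply walk_app with a; simpl; auto|rewrite length_app; simpl; lia]. }
  destruct (edge_levels q b _ gb (adj_sym _ _ Hbq) Hgq (conj Hb Lb)) as [i [Ei Hi]].
  replace i with (length ga) in Hi by lia.
  change (lam :: ga ++ [q]) with ((lam :: ga) ++ [q]) in Hi.
  rewrite app_nth1 in Hi by (simpl; lia).
  rewrite (walk_last lam lam ga a Ha) in Hi; rewrite Hi.
  replace (length ga) with (length gb) by lia; exact (walk_last lam lam gb b Hb).
Qed.

Lemma children_list p N : 1 <= lev p -> neighbors p N ->
  exists C, NoDup C /\ (forall y, In y C <-> adj p y /\ lev y = S (lev p)) /\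
    S (length C) = length N.
Proof.
  intros Hp [Hnd HN].
  set (f := fun y => lev y =? S (lev p)).
  exists (filter f N); split; [|split].
  - now apply NoDup_filter.
  - intros y; unfold f; now rewrite filter_In, Nat.eqb_eq, HN.
  - destruct (parent_exists p Hp) as [u [Hup Eu]].
    assert (Hparents : forall y, In y (filter (fun y => negb (f y)) N) -> y = u).
    { intros y Hy; apply filter_In in Hy as [Hy Hfy]; apply HN in Hy.
      unfold f in Hfy; apply Bool.negb_true_iff, Nat.eqb_neq in Hfy.
      destruct (adj_lev_succ p y Hy); [contradiction|].
      apply (parent_unique y u p); auto. }
    assert (Hu : In u (filter (fun y => negb (f y)) N)).
    { apply filter_In; split; [now apply HN, adj_sym|].
      unfold f; apply Bool.negb_true_iff, Nat.eqb_neq; lia. }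
    rewrite <- (filter_length f N), (NoDup_length_one _ u (NoDup_filter _ Hnd) Hu Hparents).
    lia.
Qed.

Definition level_list (j : nat) (L : list V) : Prop :=
  NoDup L /\ forall x, In x L <-> lev x = j.

Lemma level_list_not_root j L p : 1 <= j -> level_list j L -> In p L -> p <> lam.
Proof. intros Hj [_ HL] Hp ->; apply HL in Hp; rewrite lev_root in Hp; lia. Qed.

Lemma children_of_list j (cap : V -> nat) L : 1 <= j -> NoDup L ->
  (forall p, In p L -> lev p = j /\ exists N, neighbors p N /\ length N = S (cap p)) ->
  exists L', NoDup L' /\ (forall y, In y L' <-> lev y = S j /\ exists p, In p L /\ adj p y) /\
    length L' = list_sum (map cap L).
Proof.
  intros Hj; induction L as [|p L IH]; intros Hnd HL.
  - exists []; split; [constructor|split; [|reflexivity]].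
    intros y; simpl; split; [intros []|intros [_ [q [[] _]]]].
  - apply NoDup_cons_iff in Hnd as [Hp Hnd].
    destruct (HL p (or_introl eq_refl)) as [Ep [N [HN EN]]].
    destruct IH as [L' [Hnd' [HL' E']]]; [exact Hnd|intros q Hq; apply HL; now right|].
    destruct (children_list p N ltac:(lia) HN) as [C [HndC [HC EC]]].
    exists (C ++ L'); split; [|split].
    + apply NoDup_app; auto.
      intros y Hy Hy'; apply HC in Hy as [Hpy Ey]; apply HL' in Hy' as [_ [q [Hq Hqy]]].
      assert (p = q) as <- by (apply (parent_unique p q y); auto;
        rewrite (proj1 (HL q (or_intror Hq))); lia).
      contradiction.
    + intros y; rewrite in_app_iff, HC, HL'; split.
      * intros [[Hpy Ey]|[Ey [q [Hq Hqy]]]]; (split; [lia|]).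
        -- exists p; split; [now left|exact Hpy].
        -- exists q; split; [now right|exact Hqy].
      * intros [Ey [q [[<-|Hq] Hqy]]]; [left; split; [auto|lia]|right; eauto].
    + simpl; rewrite length_app; lia.
Qed.

Lemma level_list_succ j (cap : V -> nat) L : 1 <= j -> level_list j L ->
  (forall p, In p L -> exists N, neighbors p N /\ length N = S (cap p)) ->
  exists L', level_list (S j) L' /\ length L' = list_sum (map cap L).
Proof.
  intros Hj [Hnd HL] HN.
  destruct (children_of_list j cap L Hj Hnd) as [L' [Hnd' [HL' E']]].
  { intros p Hp; split; [now apply HL|auto]. }
  exists L'; split; [split; [exact Hnd'|]|exact E'].
  intros y; rewrite HL'; split; [tauto|intros Ey; split; [exact Ey|]].
  destruct (parent_exists y ltac:(lia)) as [u [Huy Eu]].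
  exists u; split; [apply HL; lia|exact Huy].
Qed.

Lemma level_list_one N : neighbors lam N -> level_list 1 N.
Proof.
  intros [Hnd HN]; split; [exact Hnd|intros x; rewrite HN; split].
  - intros Hx; pose proof (lev_adj lam x Hx); rewrite lev_root in *.
    destruct (lev x) eqn:E; [|lia].
    apply lev_eq0 in E; subst; destruct (adj_irrefl _ Hx).
  - intros Ex; destruct (parent_exists x ltac:(lia)) as [u [Hux Eu]].
    rewrite (lev_eq0 u ltac:(lia)) in Hux; exact Hux.
Qed.

Lemma dist_to_root u : dist adj u lam (lev u).
Proof.
  split.
  - destruct (geodesic_exists u) as [g [Hg Eg]]; destruct (walk_rev _ _ _ Hg) as [l [Hl El]].
    exists l; split; [exact Hl|lia].
  - intros l Hl; destruct (walk_rev _ _ _ Hl) as [l' [Hl' <-]]; exact (lev_le_walk u l' Hl').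
Qed.

(* The level set [j] is crossed by every geodesic of length at least [j], exactly once. *)
Lemma level_list_perimeter r j L : 1 <= j <= r -> level_list j L ->
  perimeter_radius_le adj lam L r.
Proof.
  intros Hj [Hnd HL].
  assert (Hcover : perimeter_cond_i adj lam L j).
  { intros u Hu; specialize (Hu (lev u) (dist_to_root u)).
    destruct (geodesic_exists u) as [g Hg].
    exists (nth j (lam :: g) lam); split.
    - apply HL, (lev_geodesic_nth g u); [exact Hg|destruct Hg; lia].
    - destruct Hg as [Hg Eg]; exists g, (lev u).
      split; [exact Hg|split; [apply lev_dist|split; [exact Eg|]]].
      apply nth_In; simpl; lia. }
  split; [repeat split|exists j; split; [lia|exact Hcover]].
  - exact Hnd.
  - intros Hroot; pose proof (proj1 (HL lam) (proj2 (Hroot lam) eq_refl)).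
    rewrite lev_root in *; lia.
  - now exists j.
  - intros p p' Hp Hp' [l [n [Hl [Hn [En Hin]]]]].
    rewrite (dist_unique _ _ _ _ Hn (lev_dist p')) in En.
    destruct (In_nth _ _ lam Hin) as [i [Hi <-]].
    apply HL in Hp, Hp'.
    rewrite (lev_geodesic_nth l p' i (conj Hl En)) in Hp by (simpl in Hi; lia).
    replace i with (length l) by lia; exact (walk_last lam lam l p' Hl).
Qed.

Context (r : nat) (cap : V -> nat)
  (cap_spec : forall v, v <> lam -> 2 <= cap v /\ capacity r v (cap v)).

Definition weighted_perimeter (P : list V) (d : V -> nat) : Prop :=
  perimeter_radius_le adj lam P r /\
  (forall p, In p P -> 1 <= d p /\ deg_ge adj p (d p + 1)) /\ list_sum (map d P) = r.

Lemma weighted_perimeter_at_level j L :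
  1 <= j <= r -> level_list j L -> length L <= r <= list_sum (map cap L) ->
  exists P d, weighted_perimeter P d.
Proof.
  intros Hj HL Hr.
  pose proof (fun p => level_list_not_root j L p ltac:(lia) HL) as Hnonroot.
  destruct (list_sum_map_split cap L r (proj1 HL)) as [d [Hd Hsum]]; [|lia|].
  { intros p Hp; pose proof (cap_spec p (Hnonroot p Hp)); lia. }
  exists L, d; split; [exact (level_list_perimeter r j L Hj HL)|split; [|exact Hsum]].
  intros p Hp; specialize (Hd p Hp); split; [lia|].
  destruct (cap_spec p (Hnonroot p Hp)) as [_ [_ [Hdeg _]]].
  apply (deg_ge_le p (S (cap p))); [lia|exact Hdeg].
Qed.

(* Either the capacities of level [j] already reach [r], or no vertex of level [j] has its
   capacity truncated, and level [j+1] is at least twice as large but still smaller than [r]. *)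
Lemma weighted_perimeter_from_level n j L :
  r - length L <= n -> 1 <= j < length L -> length L < r -> level_list j L ->
  exists P d, weighted_perimeter P d.
Proof.
  revert j L; induction n as [|n IH]; intros j L Hn Hj Hr HL; [lia|].
  pose proof (fun p => level_list_not_root j L p ltac:(lia) HL) as Hnonroot.
  destruct (le_lt_dec r (list_sum (map cap L))) as [Hbig|Hsmall].
  - apply (weighted_perimeter_at_level j L); auto; lia.
  - destruct (level_list_succ j cap L ltac:(lia) HL) as [L' [HL' E']].
    { intros p Hp; destruct (cap_spec p (Hnonroot p Hp)) as [_ [_ [_ HN]]].
      apply HN; pose proof (list_sum_map_In cap L p Hp); lia. }
    pose proof (list_sum_map_ge cap 2 L (fun p Hp => proj1 (cap_spec p (Hnonroot p Hp)))).
    apply (IH (S j) L'); auto; lia.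
Qed.

End Graphs.

Theorem lemma5p4 (V : Type) (adj : V -> V -> Prop) (lam : V) (r : nat) :
  is_tree adj ->
  3 <= r ->
  deg_ge adj lam 2 -> deg_le adj lam (r - 1) ->
  (forall v, v <> lam -> deg_ge adj v 3) ->
  exists (P : list V) (d : V -> nat),
    perimeter_radius_le adj lam P r /\
    (forall p, In p P -> 1 <= d p /\ deg_ge adj p (d p + 1)) /\
    list_sum (map d P) = r.
Proof.
  intros [adj_sym [adj_irrefl [adj_conn adj_acyclic]]] Hr Hlam_ge Hlam_le Hdeg.
  destruct (choice (dist adj lam)) as [lev lev_dist].
  { intros v; destruct (adj_conn lam v) as [l Hl]; exact (dist_exists adj lam l v Hl). }
  destruct (choice (fun v c => v <> lam -> 2 <= c /\ capacity adj r v c)) as [cap cap_spec].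
  { intros v; destruct (classic (v = lam)) as [->|Hv]; [now exists 0|].
    destruct (capacity_exists adj r v 2 ltac:(lia) (Hdeg v Hv)) as [c Hc]; now exists c. }
  destruct (deg_ge_or_neighbors adj lam (r - 1)) as [[l [Hl [Hladj Hlen]]]|[N [HN HlenN]]].
  - pose proof (Hlam_le l Hl Hladj); lia.
  - pose proof (deg_ge_neighbors_length adj lam 2 N Hlam_ge HN).
    apply (weighted_perimeter_from_level adj adj_sym adj_irrefl adj_acyclic lam lev lev_dist
      r cap cap_spec (r - length N) 1 N); try lia.
    exact (level_list_one adj adj_irrefl lam lev lev_dist N HN).
Qed.
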